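(* Let $G=(V,E)$ be a symmetric tree topology with compute nodes $V_C$, and let sets $R,S$ with $|R|\le|S|$ be initially partitioned among the compute nodes, with $N_v$ the number of elements of $R$ and $S$ held by node $v$. Let $E_\beta=\{e\in E:\min\{\sum_{v\in V_e^+}N_v,\sum_{v\in V_e^-}N_v\}\ge|R|\}$ and let $G_\beta$ be the subgraph of $G$ induced by the edge set $E_\beta$. Then $G_\beta$ is a connected tree.
   Context: The network is a directed graph $G=(V,E)$ with compute nodes $V_C\subseteq V$. It is a symmetric tree topology: for every $(u,v)\in E$ also $(v,u)\in E$ with the same bandwidth, and the underlying undirected graph is a tree. For an edge $e=(u,v)$, removing $e$ splits the compute nodes into $V_e^-$ (on $u$'s side) and $V_e^+$ (on $v$'s side). The edge-induced subgraph of $E_\beta$ has as vertices the endpoints of edges in $E_\beta$ and as edges $E_\beta$. *)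

From mathcomp Require Import all_boot.
Set Implicit Arguments. Unset Strict Implicit. Unset Printing Implicit Defensive.

Section Defs.
Variable V : finType.

Definition connected_on (W : {set V}) (e : rel V) : Prop :=
  forall x y, x \in W -> y \in W ->
    exists p : seq V, [/\ path e x p, last x p = y & all (mem W) p].

Definition acyclic (e : rel V) : Prop :=
  forall c : seq V, 3 <= size c -> ~~ ucycleb e c.

Definition is_tree (E : rel V) : Prop :=
  [/\ irreflexive E, connected_on [set: V] E & acyclic E].

Definition rem_edge (E : rel V) (u v : V) : rel V :=
  fun x y => E x y && ~~ (((x == u) && (y == v)) || ((x == v) && (y == u))).

Definition side_minus (E : rel V) (VC : {set V}) (u v : V) : {set V} :=
  [set w in VC | connect (rem_edge E u v) u w].
Definition side_plus (E : rel V) (VC : {set V}) (u v : V) : {set V} :=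
  [set w in VC | connect (rem_edge E u v) v w].

Definition Nload (TR TS : finType) (locR : TR -> V) (locS : TS -> V) (v : V) : nat :=
  #|[set r | locR r == v]| + #|[set s | locS s == v]|.

Definition Ebeta (E : rel V) (VC : {set V}) (TR TS : finType)
    (locR : TR -> V) (locS : TS -> V) : rel V :=
  fun u v => E u v &&
    (#|TR| <= minn (\sum_(w in side_plus E VC u v) Nload locR locS w)
                   (\sum_(w in side_minus E VC u v) Nload locR locS w)).

Definition endpoints (e : rel V) : {set V} :=
  [set x | [exists y, e x y || e y x]].
End Defs.

From mathcomp Require Import all_boot.
Set Implicit Arguments. Unset Strict Implicit. Unset Printing Implicit Defensive.

(** Call the [u]-side of a tree edge [uv] heavy when it holds at least [|R|]
    elements, so that [uv] is in [E_beta] iff both of its sides are heavy.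
    If [ab] is another edge and [a] lies on the [u]-side of [uv], then one
    whole side of [ab] lies on the [u]-side of [uv]; hence if [ab] is in
    [E_beta], every edge [uv] has a heavy side facing [a].  Along the tree
    path between two endpoints [x] and [y] of [E_beta]-edges, every edge thus
    has a heavy side facing [x] and one facing [y], so it is in [E_beta]. *)

Section RemEdge.
Variables (V : finType) (E : rel V).

Lemma rem_edgeC u v : rem_edge E u v =2 rem_edge E v u.
Proof. by move=> x y; rewrite /rem_edge orbC. Qed.

Lemma rem_edge_off u v x y : x != v -> y != v -> rem_edge E u v x y = E x y.
Proof. by move=> /negbTE xv /negbTE yv; rewrite /rem_edge xv yv !andbF andbT. Qed.

Lemma side_plusE VC u v : side_plus E VC u v = side_minus E VC v u.
Proof. by apply/setP => w; rewrite !inE (eq_connect (rem_edgeC u v)). Qed.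

Lemma connect_rem_edge_avoid a b u v z w :
  ~~ connect (rem_edge E a b) z v ->
  connect (rem_edge E a b) z w -> connect (rem_edge E u v) z w.
Proof.
move=> zNv /connectP [p zp ->]; apply/connectP; exists p => //.
apply: (sub_in_path (P := predC1 v)) (zp) => [x y /= xv yv /andP [Exy _]|].
  by rewrite rem_edge_off.
apply/allP => y /(path_connect zp) zy /=.
by apply: contraNneq zNv => <-.
Qed.

Hypotheses (Esym : symmetric E) (Eirr : irreflexive E) (Eacyc : acyclic E).

Lemma rem_edge_sym u v : symmetric (rem_edge E u v).
Proof.
move=> x y; rewrite /rem_edge Esym; congr (_ && ~~ _).
by rewrite orbC (andbC (y == u)) (andbC (y == v)).
Qed.

Lemma acyclic_rem_edge_disconnect a b : E a b -> ~~ connect (rem_edge E a b) a b.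
Proof.
move=> Eab; apply/negP => /connectP [p abp]; case: (shortenP abp) => q aq uq _.
have Eq : path E a q by apply: sub_path (aq) => x y /andP [].
case: q aq uq Eq => [|c [|d q]] aq uq Eq /=.
- by move=> ab; rewrite ab Eirr in Eab.
- by move=> bc; move: aq; rewrite /= -bc /rem_edge !eqxx /= andbF.
- move=> lastb; case/negP: (Eacyc (c := [:: a, c, d & q]) isT).
  rewrite /ucycleb uq andbT; change (path E a (rcons [:: c, d & q] a)).
  by rewrite rcons_path Eq /= -lastb Esym.
Qed.

Lemma rem_edge_side_nested u v a b :
  rem_edge E u v a b -> connect (rem_edge E u v) u a ->
  (forall w, connect (rem_edge E a b) a w -> connect (rem_edge E u v) u w) \/
  (forall w, connect (rem_edge E b a) b w -> connect (rem_edge E u v) u w).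
Proof.
(* In [E \ ab] at most one of [a], [b] reaches [v]; the side of the other one
   avoids [v], hence does not use [uv] either. *)
move=> uv_ab ua; have Eab : E a b by case/andP: uv_ab.
have [av|aNv] := boolP (connect (rem_edge E a b) a v); last first.
  by left=> w aw; apply: connect_trans ua (connect_rem_edge_avoid u aNv aw).
right=> w; rewrite -!(eq_connect (rem_edgeC a b)) => bw.
have bNv : ~~ connect (rem_edge E a b) b v.
  apply: contra (acyclic_rem_edge_disconnect Eab) => bv.
  by apply: connect_trans av _; rewrite (sym_connect_sym (rem_edge_sym a b)).
apply: connect_trans (connect_trans ua (connect1 uv_ab)) _.
exact: (connect_rem_edge_avoid u bNv bw).
Qed.

End RemEdge.

Lemma path_endpoints (V : finType) (e : rel V) x p :
  path e x p -> all (mem (endpoints e)) p.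
Proof.
elim: p x => [|y p IHp] x //= /andP [exy yp]; rewrite (IHp y yp) andbT.
by rewrite inE; apply/existsP; exists x; rewrite exy orbT.
Qed.

Lemma acyclic_subrel (V : finType) (e e' : rel V) :
  subrel e e' -> acyclic e' -> acyclic e.
Proof.
move=> ee' e'acyc c c3; apply: contra (e'acyc c c3) => /andP [ce uc].
by rewrite /ucycleb uc andbT (sub_cycle ee').
Qed.

Section Ebeta.
Variables (V : finType) (E : rel V) (VC : {set V}).
Variables (TR TS : finType) (locR : TR -> V) (locS : TS -> V).
Hypotheses (Esym : symmetric E) (Eirr : irreflexive E) (Eacyc : acyclic E).

Local Notation Eb := (Ebeta E VC locR locS).

Definition heavy_side u v :=
  #|TR| <= \sum_(w in side_minus E VC u v) Nload locR locS w.

Definition heavy_toward s :=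
  forall u v, E u v -> connect (rem_edge E u v) u s -> heavy_side u v.

Lemma EbetaE u v : Eb u v = [&& E u v, heavy_side u v & heavy_side v u].
Proof. by rewrite /Ebeta leq_min side_plusE; congr (_ && _); apply: andbC. Qed.

Lemma Ebeta_sym : symmetric Eb.
Proof. by move=> u v; rewrite !EbetaE Esym; congr (_ && _); apply: andbC. Qed.

Lemma heavy_side_subset a b u v :
  side_minus E VC a b \subset side_minus E VC u v ->
  heavy_side a b -> heavy_side u v.
Proof.
move=> /subsetP ab_uv /leq_trans; apply.
by apply: (sub_le_big leqnn (fun m n => leq_addr n m)) => w /ab_uv.
Qed.

Lemma Ebeta_heavy_toward a b : Eb a b -> heavy_toward a.
Proof.
rewrite EbetaE => /and3P [Eab hab hba] u v Euv ua.
have [uv_ab|] := boolP (rem_edge E u v a b); last first.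
  by rewrite /rem_edge Eab negbK => /orP [] /andP [/eqP <- /eqP <-].
have side_sub x y :
    (forall w, connect (rem_edge E x y) x w -> connect (rem_edge E u v) u w) ->
    side_minus E VC x y \subset side_minus E VC u v.
  by move=> xy_uv; apply/subsetP => w; rewrite !inE => /andP [-> /xy_uv].
case: (rem_edge_side_nested Esym Eirr Eacyc uv_ab ua) => /side_sub sub.
- exact: heavy_side_subset sub hab.
- exact: heavy_side_subset sub hba.
Qed.

Lemma endpoints_heavy_toward x : x \in endpoints Eb -> heavy_toward x.
Proof.
rewrite inE => /existsP [y]; rewrite (Ebeta_sym y) orbb.
exact: Ebeta_heavy_toward.
Qed.

Lemma path_Ebeta s p :
  uniq (s :: p) -> path E s p ->
  heavy_toward s -> heavy_toward (last s p) -> path Eb s p.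
Proof.
elim: p s => [|v p IHp] s //= /andP [sNvp uvp] /andP [Esv vp] hs hy.
have vs_p : connect (rem_edge E v s) v (last v p).
  apply/connectP; exists p => //.
  apply: (sub_in_path (P := predC1 s)) vp => [x y /= xs ys|].
    by rewrite rem_edge_off.
  by apply/allP => x xvp /=; apply: contraNneq sNvp => <-.
have sv : Eb s v.
  by rewrite EbetaE Esv (hs _ _ Esv (connect0 _ _)) (hy _ _ _ vs_p) // Esym.
rewrite sv /=; apply: IHp => //.
by apply: (@Ebeta_heavy_toward v s); rewrite Ebeta_sym.
Qed.

End Ebeta.

Theorem lemma2 (V : finType) (E : rel V) (VC : {set V})
    (TR TS : finType) (locR : TR -> V) (locS : TS -> V) :
  (forall x y, E x y = E y x) ->
  is_tree E ->
  (forall r, locR r \in VC) ->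
  (forall s, locS s \in VC) ->
  #|TR| <= #|TS| ->
  let Eb := Ebeta E VC locR locS in
  connected_on (endpoints Eb) Eb /\ acyclic Eb.
Proof.
move=> Esym [Eirr Econn Eacyc] _ _ _ Eb; split.
  move=> x y xEb yEb; have [p [xp py _]] := Econn x y (in_setT x) (in_setT y).
  move: yEb; rewrite -py; case: (shortenP xp) => q xq uq _ yEb.
  have xq_Eb : path Eb x q.
    by apply: (path_Ebeta Esym Eirr Eacyc) => //;
      apply: (endpoints_heavy_toward Esym Eirr Eacyc).
  by exists q; split; last exact: path_endpoints xq_Eb.
by apply: acyclic_subrel Eacyc => u v /andP [].
Qed.
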